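(* Let $\mathbf{W}=\langle W;\to,\neg,{}^{+},{}^{-},1\rangle$ be a quasi-Wajsberg* algebra, $0:=1\to 1$ and $x\wedge y:=\neg(\neg x\vee\neg y)$. Then for any $x,y,z\in W$: (1) $x\vee x=0\to x$ and $x\wedge x=0\to x$; (2) $x\to(y\wedge z)=(x\to y)\wedge(x\to z)$, $(x\wedge y)\to z=(x\to z)\vee(y\to z)$ and $(x\vee y)\to z=(x\to z)\wedge(y\to z)$; (3) $x\to y=(0\to x)\to y=x\to(0\to y)=(0\to x)\to(0\to y)$; (4) $x\vee y=0\to(x\vee y)=(0\to x)\vee y=x\vee(0\to y)=(0\to x)\vee(0\to y)$ and $x\wedge y=0\to(x\wedge y)=(0\to x)\wedge y=x\wedge(0\to y)=(0\to x)\wedge(0\to y)$.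
   Context: A quasi-Wajsberg* algebra is an algebra $\langle W;\to,\neg,{}^{+},{}^{-},1\rangle$ of type $\langle2,1,1,1,0\rangle$ such that for all $x,y,z\in W$: (QW*1) $x\to y=\neg y\to\neg x$; (QW*2) $(x\to 1)\to((y\to 1)\to z)=(y\to 1)\to((x\to 1)\to z)$; (QW*3) $(1\to x)\to 1=1$; (QW*4) $(z\to z)\to(x\to y)=x\to y$; (QW*5) $(1\to 1)\to x^{+}=((1\to 1)\to x)^{+}=(x\to 1)\to 1$ and $(1\to 1)\to x^{-}=((1\to 1)\to x)^{-}=(x\to\neg 1)\to\neg 1$; (QW*6) $x\to y=(y^{+}\to x^{-})\to(x^{+}\to y^{-})$; (QW*7) $\neg(x\to y)=y\to x$; (QW*8) $\neg\neg x=x$; (QW*9) $(x\to(\neg x\to y))^{+}=x^{+}\to(\neg x^{+}\to y^{+})$; (QW*10) $x\vee y=y\vee x$; (QW*11) $x\vee(y\vee z)=(x\vee y)\vee z$; (QW*12) $x\to(y\vee z)=(x\to y)\vee(x\to z)$; where $x\vee y:=((x^{+}\to y^{+})^{+}\to(\neg x)^{-})\to((y^{-}\to x^{-})^{-}\to x^{-})$. Conventions: ${}^+,{}^-$ bind tighter than $\neg$, which binds tighter than $\to$, and $\to$ binds tighter than $\vee,\wedge$. *)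

Record QWStarAlgebra := {
  qw_car :> Type;
  qw_imp : qw_car -> qw_car -> qw_car;
  qw_neg : qw_car -> qw_car;
  qw_plus : qw_car -> qw_car;
  qw_minus : qw_car -> qw_car;
  qw_one : qw_car
}.

Section Ops.
Variable W : QWStarAlgebra.
Local Notation "x --> y" := (qw_imp W x y) (at level 55, right associativity).
Local Notation "~~ x" := (qw_neg W x) (at level 35, right associativity).
Local Notation "x ^+" := (qw_plus W x) (at level 30).
Local Notation "x ^-" := (qw_minus W x) (at level 30).
Local Notation "1" := (qw_one W).

Definition qw_join (x y : W) : W :=
  (((x ^+ --> y ^+) ^+ --> (~~ x) ^-) --> ((y ^- --> x ^-) ^- --> x ^-)).

Definition qw_meet (x y : W) : W := ~~ (qw_join (~~ x) (~~ y)).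

Definition qw_zero : W := 1 --> 1.

Definition is_QWStar : Prop :=
  (forall x y : W, x --> y = ~~ y --> ~~ x) /\
  (forall x y z : W, (x --> 1) --> ((y --> 1) --> z) = (y --> 1) --> ((x --> 1) --> z)) /\
  (forall x : W, (1 --> x) --> 1 = 1) /\
  (forall x y z : W, (z --> z) --> (x --> y) = x --> y) /\
  (forall x : W, (1 --> 1) --> x ^+ = ((1 --> 1) --> x) ^+ /\
                 ((1 --> 1) --> x) ^+ = (x --> 1) --> 1) /\
  (forall x : W, (1 --> 1) --> x ^- = ((1 --> 1) --> x) ^- /\
                 ((1 --> 1) --> x) ^- = (x --> ~~ 1) --> ~~ 1) /\
  (forall x y : W, x --> y = (y ^+ --> x ^-) --> (x ^+ --> y ^-)) /\
  (forall x y : W, ~~ (x --> y) = y --> x) /\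
  (forall x : W, ~~ ~~ x = x) /\
  (forall x y : W, (x --> (~~ x --> y)) ^+ = x ^+ --> (~~ (x ^+) --> y ^+)) /\
  (forall x y : W, qw_join x y = qw_join y x) /\
  (forall x y z : W, qw_join x (qw_join y z) = qw_join (qw_join x y) z) /\
  (forall x y z : W, x --> qw_join y z = qw_join (x --> y) (x --> z)).
End Ops.


(* The element [0 := 1 -> 1] is a left unit for implications (QW*4), and
   (QW*6) applied to [0 -> x] yields [x \/ x = 0 -> x].  Then (QW*12) gives
   [x -> (0 -> y) = 0 -> (x -> y) = x -> y], and [~ (x -> y) = y -> x] moves
   this to the antecedent.  Joins and meets are built from implications, so
   they absorb [0 ->] in each argument; the laws for [/\] are the De Morgan
   duals of (QW*12). *)

Section QWStarTheory.

Context {W : QWStarAlgebra}.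
Hypothesis HW : is_QWStar W.

Local Notation "x --> y" := (qw_imp W x y) (at level 55, right associativity).
Local Notation "~~ x" := (qw_neg W x) (at level 35, right associativity).
Local Notation "x ^+" := (qw_plus W x) (at level 30).
Local Notation "x ^-" := (qw_minus W x) (at level 30).
Local Notation "1" := (qw_one W).
Local Notation "0" := (qw_zero W).
Local Notation join := (qw_join W).
Local Notation meet := (qw_meet W).

Lemma imp_contra (x y : W) : x --> y = ~~ y --> ~~ x.
Proof. destruct HW as (H & _). exact (H x y). Qed.

Lemma zero_imp_one : 0 --> 1 = 1.
Proof. destruct HW as (_ & _ & H & _). exact (H 1). Qed.

Lemma imp_self_imp (x y z : W) : (z --> z) --> (x --> y) = x --> y.
Proof. destruct HW as (_ & _ & _ & H & _). exact (H x y z). Qed.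

Lemma zero_imp_plus (x : W) : 0 --> x ^+ = (0 --> x) ^+.
Proof. destruct HW as (_ & _ & _ & _ & H & _). exact (proj1 (H x)). Qed.

Lemma zero_imp_plusE (x : W) : (0 --> x) ^+ = (x --> 1) --> 1.
Proof. destruct HW as (_ & _ & _ & _ & H & _). exact (proj2 (H x)). Qed.

Lemma zero_imp_minus (x : W) : 0 --> x ^- = (0 --> x) ^-.
Proof. destruct HW as (_ & _ & _ & _ & _ & H & _). exact (proj1 (H x)). Qed.

Lemma zero_imp_minusE (x : W) : (0 --> x) ^- = (x --> ~~ 1) --> ~~ 1.
Proof. destruct HW as (_ & _ & _ & _ & _ & H & _). exact (proj2 (H x)). Qed.

Lemma imp_plus_minus (x y : W) : x --> y = (y ^+ --> x ^-) --> (x ^+ --> y ^-).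
Proof. destruct HW as (_ & _ & _ & _ & _ & _ & H & _). exact (H x y). Qed.

Lemma neg_imp (x y : W) : ~~ (x --> y) = y --> x.
Proof. destruct HW as (_ & _ & _ & _ & _ & _ & _ & H & _). exact (H x y). Qed.

Lemma negK (x : W) : ~~ ~~ x = x.
Proof. destruct HW as (_ & _ & _ & _ & _ & _ & _ & _ & H & _). exact (H x). Qed.

Lemma imp_join_r (x y z : W) : x --> join y z = join (x --> y) (x --> z).
Proof. destruct HW as (_ & _ & _ & _ & _ & _ & _ & _ & _ & _ & _ & _ & H). exact (H x y z). Qed.

Lemma zero_imp_imp (x y : W) : 0 --> (x --> y) = x --> y.
Proof. exact (imp_self_imp x y 1). Qed.

Lemma neg_zero : ~~ 0 = 0.
Proof. exact (neg_imp 1 1). Qed.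

Lemma neg_zero_imp (x : W) : ~~ (0 --> x) = 0 --> ~~ x.
Proof. now rewrite neg_imp, imp_contra, neg_zero. Qed.

Lemma imp_self (x : W) : x --> x = 0.
Proof.
  rewrite <- (imp_self_imp x x 1), imp_contra, !neg_imp.
  apply imp_self_imp.
Qed.

Lemma plus_zero : 0 ^+ = 0.
Proof. now rewrite <- (imp_self 0), zero_imp_plusE, imp_self, zero_imp_one. Qed.

Lemma minus_zero : 0 ^- = 0.
Proof.
  transitivity ((0 --> 0) ^-); [now rewrite (imp_self 0) |].
  now rewrite zero_imp_minusE, <- neg_zero_imp, zero_imp_one, (imp_self (~~ 1)).
Qed.

Lemma zero_imp_neg_minus (x : W) : 0 --> (~~ x) ^- = x ^+ --> 0.
Proof.
  rewrite zero_imp_minus, zero_imp_minusE, <- (imp_contra 1 x).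
  rewrite (imp_contra (x ^+) 0), neg_zero, <- neg_zero_imp.
  rewrite zero_imp_plus, zero_imp_plusE, neg_imp.
  now rewrite (imp_contra (1 --> x)), negK, neg_imp.
Qed.

Lemma join_idem (x : W) : join x x = 0 --> x.
Proof.
  unfold qw_join.
  rewrite !imp_self, plus_zero, minus_zero, zero_imp_neg_minus.
  now rewrite (imp_plus_minus 0 x), plus_zero, minus_zero.
Qed.

Lemma imp_zero_imp_r (x y : W) : x --> (0 --> y) = x --> y.
Proof. now rewrite <- join_idem, imp_join_r, join_idem, zero_imp_imp. Qed.

Lemma imp_zero_imp_l (x y : W) : (0 --> x) --> y = x --> y.
Proof. now rewrite <- neg_imp, imp_zero_imp_r, neg_imp. Qed.

Lemma join_zero_imp_l (x y : W) : join (0 --> x) y = join x y.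
Proof.
  unfold qw_join.
  rewrite neg_zero_imp, <- zero_imp_plus, <- !zero_imp_minus.
  now rewrite imp_zero_imp_l, !imp_zero_imp_r.
Qed.

Lemma join_zero_imp_r (x y : W) : join x (0 --> y) = join x y.
Proof.
  unfold qw_join.
  rewrite <- zero_imp_plus, <- zero_imp_minus.
  now rewrite imp_zero_imp_r, imp_zero_imp_l.
Qed.

Lemma zero_imp_join (x y : W) : 0 --> join x y = join x y.
Proof. apply zero_imp_imp. Qed.

Lemma meet_idem (x : W) : meet x x = 0 --> x.
Proof. unfold qw_meet. now rewrite join_idem, neg_zero_imp, negK. Qed.

Lemma zero_imp_meet (x y : W) : 0 --> meet x y = meet x y.
Proof. unfold qw_meet. now rewrite <- neg_zero_imp, zero_imp_join. Qed.

Lemma meet_zero_imp_l (x y : W) : meet (0 --> x) y = meet x y.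
Proof. unfold qw_meet. now rewrite neg_zero_imp, join_zero_imp_l. Qed.

Lemma meet_zero_imp_r (x y : W) : meet x (0 --> y) = meet x y.
Proof. unfold qw_meet. now rewrite neg_zero_imp, join_zero_imp_r. Qed.

Lemma imp_meet_r (x y z : W) : x --> meet y z = meet (x --> y) (x --> z).
Proof.
  unfold qw_meet.
  rewrite <- (neg_imp (~~ join (~~ y) (~~ z)) x), imp_contra, negK, imp_join_r.
  now rewrite <- (imp_contra y x), <- (imp_contra z x), !neg_imp.
Qed.

Lemma imp_meet_l (x y z : W) : meet x y --> z = join (x --> z) (y --> z).
Proof.
  unfold qw_meet.
  now rewrite imp_contra, negK, imp_join_r, <- !imp_contra.
Qed.

Lemma imp_join_l (x y z : W) : join x y --> z = meet (x --> z) (y --> z).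
Proof.
  unfold qw_meet.
  now rewrite !neg_imp, <- imp_join_r, neg_imp.
Qed.

End QWStarTheory.

Theorem proposition3p3 (W : QWStarAlgebra) (HW : is_QWStar W) :
  let imp := qw_imp W in
  let join := qw_join W in
  let meet := qw_meet W in
  let O := qw_zero W in
  forall x y z : W,
    (* (1) *)
    (join x x = imp O x /\ meet x x = imp O x) /\
    (* (2) *)
    (imp x (meet y z) = meet (imp x y) (imp x z) /\
     imp (meet x y) z = join (imp x z) (imp y z) /\
     imp (join x y) z = meet (imp x z) (imp y z)) /\
    (* (3) *)
    (imp x y = imp (imp O x) y /\
     imp (imp O x) y = imp x (imp O y) /\
     imp x (imp O y) = imp (imp O x) (imp O y)) /\
    (* (4) *)
    (join x y = imp O (join x y) /\
     imp O (join x y) = join (imp O x) y /\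
     join (imp O x) y = join x (imp O y) /\
     join x (imp O y) = join (imp O x) (imp O y)) /\
    (meet x y = imp O (meet x y) /\
     imp O (meet x y) = meet (imp O x) y /\
     meet (imp O x) y = meet x (imp O y) /\
     meet x (imp O y) = meet (imp O x) (imp O y)).
Proof.
  intros imp join meet O x y z; subst imp join meet O.
  repeat split.
  - apply (join_idem HW).
  - apply (meet_idem HW).
  - apply (imp_meet_r HW).
  - apply (imp_meet_l HW).
  - apply (imp_join_l HW).
  - now rewrite (imp_zero_imp_l HW).
  - now rewrite (imp_zero_imp_l HW), (imp_zero_imp_r HW).
  - now rewrite !(imp_zero_imp_l HW).
  - now rewrite (zero_imp_join HW).
  - now rewrite (zero_imp_join HW), (join_zero_imp_l HW).
  - now rewrite (join_zero_imp_l HW), (join_zero_imp_r HW).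
  - now rewrite !(join_zero_imp_l HW).
  - now rewrite (zero_imp_meet HW).
  - now rewrite (zero_imp_meet HW), (meet_zero_imp_l HW).
  - now rewrite (meet_zero_imp_l HW), (meet_zero_imp_r HW).
  - now rewrite !(meet_zero_imp_l HW).
Qed.
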